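(* Let $K$ be a field of characteristic $\neq2$ with the identity involution, let $\varepsilon,\delta\in\{1,-1\}$, and suppose $A$ is a nonsingular $n\times n$ matrix and $\Phi$ an $n\times n$ Frobenius block with $A=\varepsilon A^T$ and $A\Phi=\delta(A\Phi)^T$. Then $\varepsilon=1$ or $\delta=1$. If moreover $\chi_\Phi(x)=x^n$, then $\varepsilon=1$ when $n$ is odd and $\delta=1$ when $n$ is even.
   Context: A Frobenius block is an $n\times n$ matrix $\Phi$ with ones on the subdiagonal, last column $(-c_n,\dots,-c_1)^T$, zeros elsewhere, whose characteristic polynomial $\chi_\Phi(x)=x^n+c_1x^{n-1}+\dots+c_n$ is a power of an irreducible polynomial. With the identity involution, $A^*=A^T$. *)

From HB Require Import structures.
From mathcomp Require Import all_boot all_order all_algebra.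
Set Implicit Arguments. Unset Strict Implicit. Unset Printing Implicit Defensive.
Import GRing.Theory.
Local Open Scope ring_scope.

(* A Frobenius block: an n x n matrix with ones on the subdiagonal, zeros
   elsewhere outside the last column (the last column, (-c_n,...,-c_1)^T, is
   arbitrary: its entries are determined by the characteristic polynomial),
   whose characteristic polynomial is a power of an irreducible polynomial. *)
Definition frobenius_block (K : fieldType) (n : nat) (Phi : 'M[K]_n) : Prop :=
  (forall i j : 'I_n, (j : nat) != n.-1 -> Phi i j = ((i : nat) == j.+1)%:R) /\
  exists (q : {poly K}) (k : nat), irreducible_poly q /\ char_poly Phi = q ^+ k.

From HB Require Import structures.
From mathcomp Require Import all_boot all_order all_algebra.
From mathcomp Require Import zify.
Set Implicit Arguments.
Unset Strict Implicit.
Unset Printing Implicit Defensive.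
Import GRing.Theory.
Local Open Scope ring_scope.

(* Write s = delta * eps. Off its last column, A Phi is A with its columns
   shifted left, so the two symmetry conditions give the Hankel-type relation
   A_(a, b+1) = s A_(a+1, b), hence A_(a, b+k) = s^k A_(a+k, b).  If
   eps = delta = -1 then s = 1 and A is both symmetric and skew, hence 0.  A
   skew matrix of odd size is singular.  If Phi is nilpotent, Cayley-Hamilton
   applied to e_0 = Phi^0 e_0, ..., e_m = Phi^m e_0 shows that the last column
   of Phi is zero; for delta = -1 this kills A_(m, j) for j > 0, and for
   n = m + 1 even the Hankel relation gives A_(0, m) = -A_(m, 0), killing
   A_(m, 0): the last row of A vanishes. *)

Lemma eq_opp_eq0 (K : fieldType) (x : K) : (2%:R : K) != 0 -> x = - x -> x = 0.
Proof.
move=> two_neq0 xN; apply/eqP.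
have : 2%:R * x == 0 by rewrite mulr_natl mulr2n {1}xN addNr.
by rewrite mulf_eq0 (negPf two_neq0).
Qed.

Lemma det_skew_odd (K : fieldType) n (A : 'M[K]_n) :
  (2%:R : K) != 0 -> odd n -> A = - A^T -> \det A = 0.
Proof.
move=> two_neq0 n_odd skewA; apply: eq_opp_eq0 => //.
by rewrite {1}skewA -scaleN1r detZ det_tr -signr_odd n_odd expr1 mulN1r.
Qed.

Lemma det_row_eq0 (K : fieldType) n (A : 'M[K]_n) i :
  (forall j, A i j = 0) -> \det A = 0.
Proof.
by move=> rowA0; rewrite (expand_det_row _ i) big1 // => j _; rewrite rowA0 mul0r.
Qed.

Lemma sum_mul_indicator (K : fieldType) m (g : 'I_m.+1 -> K) k : (k <= m)%N ->
  \sum_l g l * ((l : nat) == k)%:R = g (inord k).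
Proof.
move=> k_le_m; rewrite (bigD1 (inord k)) //= inordK ?ltnS // eqxx mulr1.
rewrite big1 ?addr0 // => l l_neq_k; case: eqP => [l_eq_k|]; last by rewrite mulr0.
by move: l_neq_k; rewrite -l_eq_k inord_val eqxx.
Qed.

Lemma inordK_le m k : (k <= m)%N -> ((inord k : 'I_m.+1) : nat) = k.
Proof. by move=> k_le_m; rewrite inordK // ltnS. Qed.

Lemma hankel_shift (K : fieldType) (f : nat -> nat -> K) (s : K) m :
  (forall a b, (a < m)%N -> (b < m)%N -> f a b.+1 = s * f a.+1 b) ->
  forall k a b, (a + k <= m)%N -> (b + k <= m)%N ->
  f a (b + k)%N = s ^+ k * f (a + k)%N b.
Proof.
move=> shift_f; elim=> [|k IHk] a b ak_le bk_le; first by rewrite !addn0 mul1r.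
rewrite addnS shift_f; [|lia|lia].
by rewrite -addSnnS IHk ?exprS ?mulrA //; lia.
Qed.

Definition companion_shape {K : nzRingType} {m : nat} (Phi : 'M[K]_m.+1) :=
  forall i j : 'I_m.+1, (j : nat) != m -> Phi i j = ((i : nat) == j.+1)%:R.

Section CompanionShape.

Context {K : fieldType} {m : nat} {Phi : 'M[K]_m.+1}.

Hypothesis PhiP : companion_shape Phi.

Lemma mulmx_companion_entry p (B : 'M[K]_(p, m.+1)) i (j : 'I_m.+1) :
  (j : nat) != m -> (B *m Phi) i j = B i (inord j.+1).
Proof.
move=> j_neq_m; rewrite mxE; under eq_bigr => l _ do rewrite PhiP //.
by apply: sum_mul_indicator; rewrite ltn_neqAle j_neq_m -ltnS /=.
Qed.

Lemma companion_pow_col0 k (i : 'I_m.+1) : (k <= m)%N ->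
  (Phi ^+ k) i ord0 = ((i : nat) == k)%:R.
Proof.
elim: k i => [|k IHk] i k_lt_m; first by rewrite expr0 mxE.
have k_le_m := ltnW k_lt_m.
rewrite exprS -mulmxE mxE; under eq_bigr => l _ do rewrite IHk //.
by rewrite sum_mul_indicator // PhiP inordK_le // ltn_eqF.
Qed.

Lemma companion_nilpotent_lastcol i :
  char_poly Phi = 'X^(m.+1) -> Phi i ord_max = 0.
Proof.
move=> charPhi; have := Cayley_Hamilton Phi.
rewrite charPhi rmorphXn /= horner_mx_X => /(congr1 (fun M : 'M[K]_m.+1 => M i ord0)).
rewrite exprS -mulmxE !mxE; under eq_bigr => l _ do rewrite companion_pow_col0 //.
rewrite sum_mul_indicator // => <-; congr (Phi _ _); apply: val_inj.
by rewrite /= inordK_le.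
Qed.

End CompanionShape.

Section CompanionForm.

Context {K : fieldType} {m : nat} {eps delta : K} {A Phi : 'M[K]_m.+1}.
Hypothesis two_neq0 : (2%:R : K) != 0.
Hypothesis PhiP : companion_shape Phi.
Hypothesis A_eps : A = eps *: A^T.
Hypothesis APhi_delta : A *m Phi = delta *: (A *m Phi)^T.

Let f a b : K := A (inord a) (inord b).

Lemma form_transpose a b : f a b = eps * f b a.
Proof. by rewrite /f {1}A_eps !mxE. Qed.

Lemma form_hankel k a b : (a + k <= m)%N -> (b + k <= m)%N ->
  f a (b + k)%N = (delta * eps) ^+ k * f (a + k)%N b.
Proof.
apply: hankel_shift => {}a {}b a_lt_m b_lt_m.
have [a_le_m b_le_m] := (ltnW a_lt_m, ltnW b_lt_m).
have := congr1 (fun M : 'M[K]_m.+1 => M (inord a) (inord b)) APhi_delta.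
rewrite /= [in RHS]mxE [X in _ * X]mxE !(mulmx_companion_entry PhiP);
  rewrite ?inordK_le ?ltn_eqF // /f => ->.
by rewrite {1}A_eps !mxE mulrA.
Qed.

Lemma form_eq0_of_antisym : eps = -1 -> delta = -1 -> A = 0.
Proof.
move=> eps_N1 delta_N1.
have sym_f a b : (a <= b <= m)%N -> f a b = f b a.
  case/andP=> a_le_b b_le_m; have := @form_hankel (b - a) a a.
  by rewrite subnKC // eps_N1 delta_N1 mulrNN mulr1 expr1n mul1r; apply.
have f0 a b : (a <= b <= m)%N -> f a b = 0.
  by move=> ab; apply: eq_opp_eq0 => //; rewrite {1}form_transpose eps_N1 mulN1r (sym_f _ _ ab).
apply/matrixP=> i j; rewrite mxE -[i]inord_val -[j]inord_val.
have [i_le_j|j_lt_i] := leqP i j.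
  by rewrite -/(f i j) f0 // i_le_j leq_ord.
by rewrite -/(f i j) form_transpose f0 ?mulr0 // (ltnW j_lt_i) leq_ord.
Qed.

Lemma form_lastrow_eq0 j : char_poly Phi = 'X^(m.+1) ->
  eps = 1 -> delta = -1 -> odd m -> A ord_max j = 0.
Proof.
move=> charPhi eps_1 delta_N1 m_odd.
have ord_maxE : (inord m : 'I_m.+1) = ord_max by apply: val_inj; rewrite /= inordK_le.
rewrite -[j]inord_val -ord_maxE -/(f m j).
case: j => [[|j] /= j_lt_m].
  apply: eq_opp_eq0 => //; rewrite {1}form_transpose.
  have := @form_hankel m 0 0; rewrite !add0n => -> //.
  by rewrite eps_1 delta_N1 mulr1 mul1r -signr_odd m_odd expr1 mulN1r.
have j_lt : (j < m)%N := j_lt_m.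
have j_le : (j <= m)%N := ltnW j_lt.
have APhi_lastcol : (A *m Phi) (inord j) ord_max = 0.
  by rewrite mxE big1 // => l _; rewrite companion_nilpotent_lastcol // mulr0.
have := congr1 (fun M : 'M[K]_m.+1 => M ord_max (inord j)) APhi_delta.
rewrite /= [in RHS]mxE [X in _ * X]mxE APhi_lastcol mulr0.
rewrite (mulmx_companion_entry PhiP) ?inordK_le ?ltn_eqF //.
by rewrite /f ord_maxE => ->.
Qed.

End CompanionForm.

Theorem lemma8 (K : fieldType) (n : nat) (eps delta : K) (A Phi : 'M[K]_n) :
  (2%:R : K) != 0 -> (0 < n)%N ->
  (eps = 1 \/ eps = -1) -> (delta = 1 \/ delta = -1) ->
  A \in unitmx -> frobenius_block Phi ->
  A = eps *: A^T -> A *m Phi = delta *: (A *m Phi)^T ->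
  (eps = 1 \/ delta = 1) /\
  (char_poly Phi = 'X^n -> (odd n -> eps = 1) /\ (~~ odd n -> delta = 1)).
Proof.
case: n A Phi => [//|m] A Phi two_neq0 _ eps_pm delta_pm A_unit [PhiP _] A_eps APhi.
have detA_neq0 : \det A != 0 by rewrite -unitfE -unitmxE.
have eps_or_delta : eps = 1 \/ delta = 1.
  case: eps_pm => eps_N1; [by left|]; case: delta_pm => delta_N1; [by right|].
  by move: detA_neq0; rewrite (form_eq0_of_antisym two_neq0 PhiP A_eps APhi) // det0 eqxx.
split=> // charPhi; split=> [n_odd|n_even].
  case: eps_pm => // eps_N1; move: detA_neq0.
  have A_skew : A = - A^T by rewrite {1}A_eps eps_N1 scaleN1r.
  by rewrite det_skew_odd ?eqxx.
case: delta_pm => // delta_N1.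
have eps_1 : eps = 1.
  case: eps_or_delta => // delta_1.
  have one_eq0 : (1 : K) = 0 by apply: eq_opp_eq0; rewrite // -{1}delta_1 delta_N1.
  by move: (oner_neq0 K); rewrite one_eq0 eqxx.
have m_odd : odd m by move: n_even; rewrite /= negbK.
move: detA_neq0; rewrite (det_row_eq0 (i := ord_max)) ?eqxx // => j.
exact: (form_lastrow_eq0 two_neq0 PhiP A_eps APhi).
Qed.
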